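(* Let $p_{11}\in(0,1)$ and let $\mathcal{B}\subseteq[0,1]$ be countable with $p_{11}\in\mathcal{B}$. Let $\mu$ be a pre-scheduling belief on $\mathbb{R}\times\mathcal{B}$ with $\mu(\cdot,b)\in\mathcal{S}(0)$ for all $b\in\mathcal{B}$, and let $\Gamma:\mathbb{R}\times[0,1]\to\{0,1\}$ be an even and increasing prescription. Then for each $y\in\mathbb{R}\cup\{\Xi\}$ (for $y=\Xi$ assuming the normalizing constant below is positive), the post-scheduling belief $\theta=F^{(2)}(\mu,\Gamma,y)$ satisfies $\theta(\cdot,b)\in\mathcal{S}(0)$ for all $b\in\mathcal{B}$.
   Context: A belief is a nonnegative function $\mu$ on $\mathbb{R}\times\mathcal{B}$ with $\sum_b\int\mu(e,b)\,de=1$; by convention the unit point mass $\delta_{(0,p_{11})}$ at $(e,b)=(0,p_{11})$ is also a belief. For $r\in\mathbb{R}$, $\mathcal{S}(r)$ is the set of functions $\nu:\mathbb{R}\to\mathbb{R}$ with $\nu(x)\ge\nu(y)$ whenever $|x-r|\le|y-r|$; by convention $\delta_r\in\mathcal{S}(r)$. $\Gamma$ is even and increasing if for each $b$, $\Gamma(e,b)=\Gamma(|e|,b)$ and $\Gamma(e,b)$ is non-decreasing in $|e|$. With $p(b,0)=1$, $p(b,1)=1-b$, the update is $F^{(2)}(\mu,\Gamma,y)=\delta_{(0,p_{11})}$ if $y\ne\Xi$, and $F^{(2)}(\mu,\Gamma,\Xi)(e,b)=p(b,\Gamma(e,b))\mu(e,b)/\sum_{b'}\int p(b',\Gamma(e',b'))\mu(e',b')\,de'$.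 $\Xi$ is the symbol ''no packet received''. *)

From HB Require Import structures.
From mathcomp Require Import all_boot all_order all_algebra.
From mathcomp Require Import all_classical all_reals.
From mathcomp Require Import ereal topology normedtype sequences esum measure
  lebesgue_measure lebesgue_integral.
Set Implicit Arguments. Unset Strict Implicit. Unset Printing Implicit Defensive.
Import Order.TTheory GRing.Theory Num.Theory.
Local Open Scope classical_set_scope.
Local Open Scope ring_scope.

Section Defs.
Variable R : realType.

Definition inS (r : R) (nu : R -> R) : Prop :=
  forall x y : R, `|x - r| <= `|y - r| -> nu y <= nu x.

(* A belief on R x B: either a density mu(e,b), or (by convention) the unit
   point mass delta_{(0,p11)}. *)
Inductive belief : Type := BDens of (R -> R -> R) | BDelta.

Definition is_belief (B : set R) (mu : belief) : Prop :=
  match mu with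
  | BDens f =>
      (forall e b, B b -> 0 <= f e b) /\
      (forall b, B b -> measurable_fun setT (fun e => f e b)) /\
      (\esum_(b in B) \int[@lebesgue_measure R]_e (f e b)%:E = 1)%E
  | BDelta => True
  end.

(* theta(.,b) in S(0).  For the point mass delta_{(0,p11)}, the slice at
   b = p11 is delta_0, which is in S(0) by convention; at b <> p11 it is the
   zero function. *)
Definition slice_inS0 (p11 : R) (theta : belief) (b : R) : Prop :=
  match theta with
  | BDens f => inS 0 (fun e => f e b)
  | BDelta => if `[< b = p11 >] then True else inS 0 (fun _ => 0)
  end.

(* Gamma : R x [0,1] -> {0,1}, with {0,1} encoded as bool (true = 1). *)
Definition even_increasing (Gamma : R -> R -> bool) : Prop :=
  forall b, 0 <= b <= 1 ->
    (forall e, Gamma e b = Gamma `|e| b) /\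
    (forall e e', `|e| <= `|e'| -> Gamma e b ==> Gamma e' b).

Definition pb (b : R) (g : bool) : R := if g then 1 - b else 1.

Definition normconst (B : set R) (p11 : R) (Gamma : R -> R -> bool)
  (mu : belief) : \bar R :=
  match mu with
  | BDens f =>
      (\esum_(b in B) \int[@lebesgue_measure R]_e (pb b (Gamma e b) * f e b)%:E)%E
  | BDelta => (pb p11 (Gamma 0 p11))%:E
  end.

(* F^(2)(mu, Gamma, y); y = None encodes the symbol Xi ("no packet"). *)
Definition F2 (B : set R) (p11 : R) (mu : belief) (Gamma : R -> R -> bool)
  (y : option R) : belief :=
  match y with
  | Some _ => BDelta
  | None =>
      match mu with
      | BDens f => BDens (fun e b =>
          pb b (Gamma e b) * f e b / fine (normconst B p11 Gamma mu))
      | BDelta => BDelta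
      end
  end.

End Defs.

From HB Require Import structures.
From mathcomp Require Import all_boot all_order all_algebra.
From mathcomp Require Import all_classical all_reals.
From mathcomp Require Import ereal topology normedtype sequences esum measure
  lebesgue_measure lebesgue_integral.
Import Order.TTheory GRing.Theory Num.Theory.
Local Open Scope classical_set_scope.
Local Open Scope ring_scope.

(* A point mass is symmetric unimodal by convention.  Otherwise the update
   multiplies each slice mu(., b) by e |-> p(b, Gamma(e, b)), which is
   nonnegative and, because Gamma is even and increasing, nonincreasing in |e|,
   then divides by a positive constant; all three operations preserve S(0). *)

Section SymmetricUnimodal.
Variable R : realType.
Implicit Types (r c b : R) (g : bool) (nu eta : R -> R).

Lemma inS_cst r c : inS r (fun _ => c).
Proof. by move=> x y _; rewrite lexx. Qed.

Lemma inS_mul r nu eta :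
  (forall x, 0 <= nu x) -> (forall x, 0 <= eta x) ->
  inS r nu -> inS r eta -> inS r (fun x => nu x * eta x).
Proof.
move=> nu_ge0 eta_ge0 Snu Seta x y lexy.
apply: le_trans (ler_wpM2r (eta_ge0 y) (Snu x y lexy)) _.
by apply: ler_wpM2l; [exact: nu_ge0 | exact: Seta].
Qed.

Lemma inS_mulr r c nu : 0 <= c -> inS r nu -> inS r (fun x => nu x * c).
Proof. by move=> c_ge0 Snu x y /Snu; apply: ler_wpM2r. Qed.

Lemma pb_ge0 b g : b <= 1 -> 0 <= pb b g.
Proof. by case: g => b_le1 //=; rewrite subr_ge0. Qed.

Lemma pb_anti b g g' : 0 <= b -> g ==> g' -> pb b g' <= pb b g.
Proof. by case: g; case: g' => //= b_ge0 _; rewrite gerBl. Qed.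

Lemma pb_Gamma_inS0 (Gamma : R -> R -> bool) b :
  even_increasing Gamma -> 0 <= b <= 1 -> inS 0 (fun e => pb b (Gamma e b)).
Proof.
move=> GammaP /[dup] b01 /andP[b_ge0 _] x y; rewrite !subr0 => lexy.
have [_ Gamma_mono] := GammaP b b01.
exact: pb_anti b_ge0 (Gamma_mono x y lexy).
Qed.

Lemma slice_inS0_delta p11 b : slice_inS0 p11 (BDelta R) b.
Proof. by rewrite /=; case: ifP => _ //; apply: inS_cst. Qed.

End SymmetricUnimodal.

Theorem lemma7 (R : realType) (p11 : R) (B : set R) (mu : belief R)
  (Gamma : R -> R -> bool) (y : option R) :
  0 < p11 < 1 ->
  countable B ->
  B `<=` `[0, 1] ->
  B p11 ->
  is_belief B mu ->
  (forall b, B b -> slice_inS0 p11 mu b) ->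
  even_increasing Gamma ->
  (y = None -> (0 < normconst B p11 Gamma mu)%E) ->
  forall b, B b -> slice_inS0 p11 (F2 B p11 mu Gamma y) b.
Proof.
move=> _ _ B01 _ mu_belief mu_S GammaP norm_gt0 b Bb.
case: y norm_gt0 => [r|] norm_gt0; first exact: slice_inS0_delta.
case: mu mu_belief mu_S norm_gt0 => [f|]; last by move=> *; apply: slice_inS0_delta.
move=> [f_ge0 _] mu_S norm_gt0 /=.
have b01 : 0 <= b <= 1 by have := B01 _ Bb; rewrite /= in_itv.
have /andP[_ b_le1] := b01.
apply: inS_mulr; first by rewrite invr_ge0 fine_ge0 // ltW // norm_gt0.
apply: inS_mul.
- by move=> e; apply: pb_ge0.
- by move=> e; apply: f_ge0.
- exact: pb_Gamma_inS0 GammaP b01.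
- exact: mu_S b Bb.
Qed.
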